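(* Let $k\ge 5$ be an integer and let $h_2(j)=k^2j^2+(k-k^2)j+1$ for integers $j\ge0$. Then $h_2\in\mathcal H_0$, $\beta_j^5(h_2)\ge 0$ for all $0\le j\le 5$, $\beta_3^6(h_2)<0$, and $\operatorname{hdepth}(h_2)=5$.
   Context: Let $\mathcal H_0$ denote the set of functions $h:\mathbb Z_{\ge 0}\to\mathbb Z_{\ge 0}$ with $h(0)>0$. For $h\in\mathcal H_0$ and integers $0\le k\le d$, put $\beta_k^d(h)=\sum_{j=0}^k(-1)^{k-j}\binom{d-j}{k-j}h(j)$. The Hilbert depth of $h$ is $\operatorname{hdepth}(h)=\max\{d\in\mathbb Z_{\ge0}:\ \beta_k^d(h)\ge 0\text{ for all }0\le k\le d\}$; this set contains $d=0$ and is known to be bounded above by $\lfloor h(1)/h(0)\rfloor$, so the maximum exists. *)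

From mathcomp Require Import all_boot all_order all_algebra.
Set Implicit Arguments. Unset Strict Implicit. Unset Printing Implicit Defensive.
Import Order.TTheory GRing.Theory Num.Theory.
Local Open Scope ring_scope.

(* Functions Z_{>=0} -> Z_{>=0} are represented as int-valued functions on nat
   whose values are nonnegative; membership in H_0 additionally asks h 0 > 0. *)
Definition inH0 (h : nat -> int) : Prop := (forall j, 0 <= h j) /\ 0 < h 0%N.

Definition beta (d k : nat) (h : nat -> int) : int :=
  \sum_(0 <= j < k.+1) (-1) ^+ (k - j) * ('C(d - j, k - j))%:R * h j.

Definition hdepth_adm (h : nat -> int) (d : nat) : Prop :=
  forall k, (k <= d)%N -> 0 <= beta d k h.

Definition is_hdepth (h : nat -> int) (d : nat) : Prop :=
  hdepth_adm h d /\ forall d', hdepth_adm h d' -> (d' <= d)%N.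

Definition h2 (k : nat) (j : nat) : int :=
  (k%:Z) ^+ 2 * (j%:Z) ^+ 2 + (k%:Z - (k%:Z) ^+ 2) * j%:Z + 1.

From mathcomp Require Import all_boot all_order all_algebra zify ring.
Set Implicit Arguments.
Unset Strict Implicit.
Unset Printing Implicit Defensive.

Import Order.TTheory GRing.Theory Num.Theory.
Local Open Scope ring_scope.

(* The numbers beta_k^d satisfy the Pascal-type recurrence
   beta_{k+1}^d = beta_{k+1}^{d+1} + beta_k^d, so an admissible depth stays
   admissible when lowered; hence one negative beta_3^6 rules out every
   depth >= 6.  For h_2 the relevant numbers are explicit polynomials in k:
   beta^5 = (1, k-4, 2k^2-2k+7, 3k-6, 6k^2+3, 12k^2+3k), all nonnegative for
   k >= 4, while beta_3^6 = -2k^2+5k-13 has negative discriminant. *)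

Lemma beta_pascal d k h :
  (k < d)%N -> beta d k.+1 h = beta d.+1 k.+1 h + beta d k h.
Proof.
move=> lt_kd; rewrite /beta !(big_nat_recr k.+1) //= !subnn !bin0 addrAC.
congr (_ + _); rewrite -big_split /=; apply: eq_big_nat => j /andP[_ lt_jk].
have le_jd : (j <= d)%N by rewrite ltnW // (leq_trans lt_jk) // ltnW.
rewrite !subSn // binS exprS natrD; ring.
Qed.

Lemma hdepth_adm_pred h d : hdepth_adm h d.+1 -> hdepth_adm h d.
Proof.
move=> adm; elim=> [|k IHk] le_kd.
  by have := adm 0%N isT; rewrite /beta !big_nat1 !subn0 !bin0.
by rewrite beta_pascal // addr_ge0 // ?adm // ?IHk // ltnW.
Qed.

Lemma hdepth_adm_le h d d' :
  (d <= d')%N -> hdepth_adm h d' -> hdepth_adm h d.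
Proof.
move=> /subnK <-; elim: (d' - d)%N => [//|n IHn] adm.
by apply/IHn/hdepth_adm_pred; rewrite -addSn.
Qed.

Lemma is_hdepth_of_beta_lt0 h d k :
  hdepth_adm h d -> beta d.+1 k h < 0 -> (k <= d.+1)%N -> is_hdepth h d.
Proof.
move=> adm beta_lt0 le_kd; split=> // d' adm'; rewrite leqNgt.
apply/negP => lt_dd'; have := hdepth_adm_le lt_dd' adm' le_kd.
by rewrite leNgt beta_lt0.
Qed.

(* h2 k j = k^2 j (j - 1) + k j + 1 *)
Lemma h2_gt0 k j : 0 < h2 k j.
Proof.
have : 0 <= j%:Z * (j%:Z - 1) by case: j => // j; rewrite mulr_ge0 ?subr_ge0.
rewrite /h2; nia.
Qed.

Lemma h2_inH0 k : inH0 (h2 k).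
Proof. by split=> [j|]; [apply: ltW|]; apply: h2_gt0. Qed.

Ltac expand_beta := rewrite /beta /h2 !big_nat_recr //= big_nil /binomial /=; ring.

Section BetaH2.
Variable k : nat.
Local Notation K := k%:Z.

Lemma beta50_h2 : beta 5 0 (h2 k) = 1.                          Proof. expand_beta. Qed.
Lemma beta51_h2 : beta 5 1 (h2 k) = K - 4.                      Proof. expand_beta. Qed.
Lemma beta52_h2 : beta 5 2 (h2 k) = 2 * K ^+ 2 - 2 * K + 7.     Proof. expand_beta. Qed.
Lemma beta53_h2 : beta 5 3 (h2 k) = 3 * K - 6.                  Proof. expand_beta. Qed.
Lemma beta54_h2 : beta 5 4 (h2 k) = 6 * K ^+ 2 + 3.             Proof. expand_beta. Qed.
Lemma beta55_h2 : beta 5 5 (h2 k) = 12 * K ^+ 2 + 3 * K.        Proof. expand_beta. Qed.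
Lemma beta63_h2 : beta 6 3 (h2 k) = - 2 * K ^+ 2 + 5 * K - 13.  Proof. expand_beta. Qed.

Lemma hdepth_adm5_h2 : (4 <= k)%N -> hdepth_adm (h2 k) 5.
Proof.
rewrite -lez_nat => le4k.
case=> [|[|[|[|[|[|//]]]]]] _;
  rewrite ?(beta50_h2, beta51_h2, beta52_h2, beta53_h2, beta54_h2, beta55_h2);
  nia.
Qed.

Lemma beta63_h2_lt0 : beta 6 3 (h2 k) < 0.
Proof. rewrite beta63_h2; nia. Qed.

End BetaH2.

Theorem mainTheorem8 (k : nat) (hk : (5 <= k)%N) :
  inH0 (h2 k) /\
  (forall j, (j <= 5)%N -> 0 <= beta 5 j (h2 k)) /\
  beta 6 3 (h2 k) < 0 /\
  is_hdepth (h2 k) 5.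
Proof.
have adm5 : hdepth_adm (h2 k) 5 by apply: hdepth_adm5_h2; apply: ltnW.
split; first exact: h2_inH0.
split; first exact: adm5.
split; first exact: beta63_h2_lt0.
exact: is_hdepth_of_beta_lt0 adm5 (beta63_h2_lt0 k) isT.
Qed.
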